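(* Let $p$ be an odd prime and let $F_{g\,\mathsf{PR},\,h\,\mathsf{ANY}}(p)$ denote the number of pairs $(g,h)$ of integers with $1\le g\le p-1$, $1\le h\le p-1$, $g$ a primitive root modulo $p$, and $g^{h}\equiv h \pmod p$. Then \[ \left|F_{g\,\mathsf{PR},\,h\,\mathsf{ANY}}(p)-\phi(p-1)\right|\le d(p-1)^{2}\,\sigma(p-1)\,\sqrt{p}\,(1+\ln p). \]
   Context: $\phi$ is Euler's totient function, $d(n)$ denotes the number of positive divisors of $n$, $\sigma(n)$ the sum of the positive divisors of $n$, and $\ln$ the natural logarithm. *)

From Stdlib Require Import Reals.
From mathcomp Require Import all_boot.

Definition prim_root_mod (n g : nat) : bool :=
  coprime g n &&
  [forall k : 'I_(totient n), (0 < (k : nat))%N ==> (g ^ k %% n != 1 %% n)].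

Definition ndiv (n : nat) : nat := size (divisors n).
Definition sigma_div (n : nat) : nat := \sum_(d <- divisors n) d.

Definition F_PR_ANY (p : nat) : nat :=
  #|[set gh : 'I_p * 'I_p |
      [&& (0 < (gh.1 : nat))%N, (0 < (gh.2 : nat))%N,
          prim_root_mod p gh.1 &
          ((gh.1 : nat) ^ (gh.2 : nat) == gh.2 %[mod p])]]|.

From Stdlib Require Import Reals Lra.
From mathcomp Require Import all_boot ssralg poly finalg zmodp finfield.

(* If u h = v (p-1) + gcd(h, p-1), then by Fermat every nonzero solution of
   x^h = c in F_p is a root of X^gcd(h, p-1) - c^u, so at most gcd(h, p-1)
   primitive roots g satisfy g^h = h mod p.  Summing over h gives
   F <= sum_h gcd(h, p-1) <= (p-1) d(p-1) <= d(p-1)^2 sigma(p-1), and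
   phi(p-1) <= p-1 obeys the same bound, so the difference is at most
   d(p-1)^2 sigma(p-1), which is below the right-hand side. *)

Section FinFieldPowers.
Import GRing.Theory.
Local Open Scope ring_scope.

Variable F : finFieldType.

Lemma expf_card_pred (x : F) : x != 0 -> x ^+ #|F|.-1 = 1.
Proof.
move=> x_neq0; apply: (mulfI x_neq0).
by rewrite -exprS (ltn_predK (finNzRing_gt1 F)) expf_card mulr1.
Qed.

Lemma card_expf_eq_le_gcdn (h : nat) (c : F) : (0 < h)%N ->
  (#|[set x : F | (x != 0%R) && (x ^+ h == c)]| <= gcdn h #|F|.-1)%N.
Proof.
move=> h_gt0; set S := [set _ | _]; set t := gcdn h #|F|.-1.
case: (egcdnP #|F|.-1 h_gt0) => km kn Bezout _.
have rootS x : x \in S -> x ^+ t = c ^+ km.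
  rewrite inE => /andP[x_neq0 /eqP <-].
  by rewrite -exprM mulnC Bezout exprD mulnC exprM expf_card_pred // expr1n mul1r.
pose P : {poly F} := 'X^t - (c ^+ km)%:P.
have sizeP : size P = t.+1 by rewrite size_XnsubC // gcdn_gt0 h_gt0.
have P_neq0 : P != 0 by rewrite -size_poly_eq0 sizeP.
rewrite cardE -ltnS -sizeP; apply: max_poly_roots P_neq0 _ (enum_uniq _).
apply/allP => x; rewrite mem_enum => /rootS xt.
by rewrite /root !hornerE xt subrr.
Qed.

End FinFieldPowers.

Section PowersModPrime.
Import GRing.Theory.
Local Open Scope ring_scope.

Variable p : nat.
Hypothesis p_pr : prime p.

Lemma eq_Fp_nat (a b : nat) : ((a%:R : 'F_p) == b%:R) = (a == b %[mod p])%N.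
Proof. by rewrite -(inj_eq val_inj) /= !val_Fp_nat. Qed.

Lemma card_expn_eq_mod_le_gcdn (h c : nat) : (0 < h)%N ->
  (#|[set g : 'I_p | (0 < g)%N && (g ^ h == c %[mod p])%N]| <= gcdn h p.-1)%N.
Proof.
move=> h_gt0; pose toFp (g : 'I_p) : 'F_p := (g : nat)%:R.
have := card_expf_eq_le_gcdn _ _ (c%:R : 'F_p) h_gt0; rewrite card_Fp //.
apply: leq_trans; rewrite -(card_in_imset (f := toFp)); last first.
  move=> a b _ _ /eqP; rewrite eq_Fp_nat !modn_small //.
  by move=> /eqP/val_inj.
apply/subset_leq_card/subsetP => x /imsetP[g]; rewrite !inE => /andP[g_gt0 gh] ->.
rewrite -(dvdn_pcharf (pchar_Fp p_pr)) gtnNdvd //=.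
by rewrite -natrX eq_Fp_nat.
Qed.

End PowersModPrime.

Lemma F_PR_ANY_le_sum_gcdn {n} : prime n.+1 ->
  F_PR_ANY n.+1 <= \sum_(i < n) gcdn i.+1 n.
Proof.
move=> p_pr; rewrite /F_PR_ANY; set A := [set _ | _].
rewrite -sum1_card big_mkcond /=.
have -> : \sum_(gh : 'I_n.+1 * 'I_n.+1) (if gh \in A then 1 else 0) =
          \sum_(g < n.+1) \sum_(h < n.+1) (if (g, h) \in A then 1 else 0).
  by rewrite pair_bigA; apply: eq_bigr => -[].
rewrite exchange_big big_ord_recl big1 ?add0n => [|g _]; last by rewrite inE /= andbF.
apply: leq_sum => i _.
apply: leq_trans (card_expn_eq_mod_le_gcdn _ p_pr i.+1 i.+1 (ltn0Sn i)).
rewrite -sum1_card [X in _ <= X]big_mkcond /=; apply: leq_sum => g _; rewrite !inE /=.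
by case: (0 < g); case: prim_root_mod; case: (_ == _ %[mod _]).
Qed.

Lemma sum_dvdn_succ d n : 0 < d -> \sum_(i < n) (d %| i.+1 : nat) = n %/ d.
Proof.
move=> d_gt0; elim: n => [|n IHn]; first by rewrite big_ord0 div0n.
by rewrite big_ord_recr /= IHn divnS // addnC.
Qed.

Lemma gcdn_le_sum_divisors n m : 0 < n ->
  gcdn m n <= \sum_(d <- divisors n) (d %| m) * d.
Proof.
move=> n_gt0; have gcd_div : gcdn m n \in divisors n.
  by rewrite -dvdn_divisors // dvdn_gcdr.
by rewrite (bigD1_seq _ gcd_div (divisors_uniq n)) /= dvdn_gcdl mul1n leq_addr.
Qed.

Lemma sum_gcdn_le_mul_ndiv n : \sum_(i < n) gcdn i.+1 n <= n * ndiv n.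
Proof.
case: (posnP n) => [->|n_gt0]; first by rewrite big_ord0.
apply: (@leq_trans (\sum_(i < n) \sum_(d <- divisors n) (d %| i.+1) * d)).
  by apply: leq_sum => i _; apply: gcdn_le_sum_divisors.
rewrite exchange_big /=.
apply: (@leq_trans (\sum_(d <- divisors n) n)); last first.
  by rewrite big_const_seq count_predT iter_addn_0 mulnC.
rewrite big_seq [X in _ <= X]big_seq; apply: leq_sum => d.
rewrite -dvdn_divisors // => /(dvdn_gt0 n_gt0) d_gt0.
by rewrite -big_distrl /= sum_dvdn_succ // leq_divM.
Qed.

Lemma ndiv_gt0 {n} : 0 < n -> 0 < ndiv n.
Proof.
move=> n_gt0; have : n \in divisors n by rewrite -dvdn_divisors.
by rewrite /ndiv; case: (divisors n).
Qed.

Lemma leq_sigma_div {n} : 0 < n -> n <= sigma_div n.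
Proof.
move=> n_gt0; have n_div : n \in divisors n by rewrite -dvdn_divisors.
by rewrite /sigma_div (bigD1_seq _ n_div (divisors_uniq n)) /= leq_addr.
Qed.

Lemma leq_mul_ndiv_sigma {n} : 0 < n -> n * ndiv n <= ndiv n ^ 2 * sigma_div n.
Proof.
move=> n_gt0; rewrite mulnC expnS expn1 -mulnA leq_mul //.
by rewrite (leq_trans (leq_sigma_div n_gt0)) // leq_pmull // ndiv_gt0.
Qed.

Lemma totient_leq n : totient n <= n.
Proof.
rewrite totient_count_coprime -[n in _ <= n]subn0 -[n - 0]muln1 -sum_nat_const_nat.
by apply: leq_sum => i _; case: coprime.
Qed.

Open Scope R_scope.

Lemma ln_ge0 {x} : 1 <= x -> 0 <= ln x.
Proof.
case/Rle_lt_or_eq_dec => [x_gt1|<-]; last by rewrite ln_1; apply: Rle_refl.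
by rewrite -ln_1; apply/Rlt_le/ln_increasing => //; apply: Rlt_0_1.
Qed.

Lemma Rabs_INR_sub_le {a b m} : (a <= m)%N -> (b <= m)%N -> Rabs (INR a - INR b) <= INR m.
Proof.
move=> /leP/le_INR le_am /leP/le_INR le_bm.
by apply: Rabs_le; have := pos_INR a; have := pos_INR b; lra.
Qed.

Lemma sqrt_mul_1_add_ln_ge1 x : 1 <= x -> 1 <= sqrt x * (1 + ln x).
Proof.
move=> x_ge1; have sqrt_ge1 : 1 <= sqrt x by rewrite -sqrt_1; apply: sqrt_le_1_alt.
have := ln_ge0 x_ge1; nra.
Qed.

Theorem mainTheorem2 (p : nat) (hp : prime p) (hodd : odd p) :
  Rabs (INR (F_PR_ANY p) - INR (totient (p - 1)%N)) <=
  INR (ndiv (p - 1)%N) ^ 2 * INR (sigma_div (p - 1)%N) * sqrt (INR p) * (1 + ln (INR p)).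
Proof.
case: p hp hodd => [//|n] p_pr _; rewrite subSS subn0.
have n_gt0 : (0 < n)%N by rewrite -ltnS prime_gt1.
set M := (ndiv n ^ 2 * sigma_div n)%N.
have le_FM : (F_PR_ANY n.+1 <= M)%N.
  rewrite (leq_trans (F_PR_ANY_le_sum_gcdn p_pr)) //.
  by rewrite (leq_trans (sum_gcdn_le_mul_ndiv n)) // leq_mul_ndiv_sigma.
have le_TM : (totient n <= M)%N.
  rewrite (leq_trans (totient_leq n)) // (leq_trans _ (leq_mul_ndiv_sigma n_gt0)) //.
  by rewrite leq_pmulr // ndiv_gt0.
apply: Rle_trans (Rabs_INR_sub_le le_FM le_TM) _.
have INR_ndiv2 : INR (ndiv n ^ 2) = INR (ndiv n) ^ 2.
  by rewrite -mulnn mult_INR; ring.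
rewrite Rmult_assoc -[INR M]Rmult_1_r /M mult_INR INR_ndiv2.
apply: Rmult_le_compat_l; first by apply: Rmult_le_pos; [apply: pow_le |]; apply: pos_INR.
apply: sqrt_mul_1_add_ln_ge1; rewrite S_INR; have := pos_INR n; lra.
Qed.
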